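(* $\dim_H F(1/2,1)\le \frac12$.
   Context: Every $x\in(0,1)\setminus\mathbb{Q}$ has a unique infinite continued fraction expansion $x=[a_1(x),a_2(x),\dots]$ with partial quotients $a_i(x)\in\mathbb{N}=\{1,2,\dots\}$. For $n\in\mathbb{N}$ let $T_n(x):=\max\{a_k(x):1\le k\le n\}$. Define $$F(1/2,1):=\Big\{x\in(0,1)\setminus\mathbb{Q}:\ \lim_{n\to\infty}\frac{T_n(x)}{e^{\sqrt{n}}}=1\Big\}.$$ $\dim_H$ denotes Hausdorff dimension. *)

From Stdlib Require Import Reals Lra ZArith.
Open Scope R_scope.

Definition gauss (x : R) : R := / x - IZR (Int_part (/ x)).

Fixpoint gauss_iter (n : nat) (x : R) : R :=
  match n with
  | O => x
  | S m => gauss (gauss_iter m x)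
  end.

(** Partial quotient a_k(x) = floor(1 / T^{k-1}(x)), for k >= 1
    (for irrational x in (0,1) this is the k-th partial quotient of
    x = [a_1(x), a_2(x), ...]). *)
Definition pq (k : nat) (x : R) : nat :=
  Z.to_nat (Int_part (/ gauss_iter (k - 1) x)).

Fixpoint Tmax (n : nat) (x : R) : nat :=
  match n with
  | O => 0%nat
  | S m => Nat.max (Tmax m x) (pq (S m) x)
  end.

Definition irrational (x : R) : Prop :=
  ~ exists (p q : Z), q <> 0%Z /\ x = IZR p / IZR q.

Definition F_half_one (x : R) : Prop :=
  0 < x < 1 /\ irrational x /\
  Un_cv (fun n => INR (Tmax n x) / exp (sqrt (INR n))) 1.

Definition diam_le (U : R -> Prop) (r : R) : Prop :=
  forall x y, U x -> U y -> Rabs (x - y) <= r.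

Definition Hdelta_null (s delta : R) (E : R -> Prop) : Prop :=
  forall eps, 0 < eps ->
    exists (U : nat -> R -> Prop) (r : nat -> R) (l : R),
      (forall i, 0 < r i /\ r i <= delta /\ diam_le (U i) (r i))
      /\ (forall x, E x -> exists i, U i x)
      /\ infinite_sum (fun i => Rpower (r i) s) l
      /\ l < eps.

Definition Hausdorff_null (s : R) (E : R -> Prop) : Prop :=
  forall delta, 0 < delta -> Hdelta_null s delta E.

Definition is_glb (P : R -> Prop) (m : R) : Prop :=
  (forall y, P y -> m <= y) /\ (forall b, (forall y, P y -> b <= y) -> b <= m).

Definition is_hausdorff_dim (E : R -> Prop) (d : R) : Prop :=
  is_glb (fun s => 0 <= s /\ Hausdorff_null s E) d.

From Stdlib Require Import Reals Lra Lia ZArith List IndefiniteDescription.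
Open Scope R_scope.

(* Let s = 1/2 + u with u > 0 and q_n(x) = a_1(x) ... a_n(x).  The cylinder of
   depth n with digits a_1 ... a_n has diameter at most q_n^-2.  If T_n(x) ~ e^(sqrt n),
   then eventually T_(n+1) <= e^lam T_n, and whenever the running maximum jumps from
   T to a new digit a, ln a >= (ln a ^ 2 - ln T ^ 2) / (2 lam); summing these jumps
   gives ln q_n >= (ln T_n ^ 2 - O(1)) / (2 lam) ~ n / (2 lam).  So the points of
   F(1/2,1) behaving like this from some N on are covered by the cylinders of depth n
   with digits below (1 + e) e^(sqrt n) and q >= e^beta, beta ~ n / (2 lam).  Each
   has s-weight q^-(1+2u) <= e^(-u beta) q^-(1+u), and the total is at most
   e^(-u beta) (sum_a a^-(1+u))^n <= e^(-u beta) (1 + 1/u)^n, which tends to 0 for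
   lam = u / (4 ln (1 + 1/u)). *)

Lemma exp_le x y : x <= y -> exp x <= exp y.
Proof. intros [H|H]; [left; now apply exp_increasing|now rewrite H; right]. Qed.

Lemma ln_le x y : 0 < x -> x <= y -> ln x <= ln y.
Proof. intros Hx [H|H]; [left; now apply ln_increasing|now rewrite H; right]. Qed.

Lemma ln_nonneg x : 1 <= x -> 0 <= ln x.
Proof. intro H. rewrite <- ln_1. apply ln_le; lra. Qed.

Lemma ln_ge_1_sub_inv y : 0 < y -> 1 - / y <= ln y.
Proof.
  intro Hy. pose proof (exp_ineq1_le (ln (/ y))) as H.
  rewrite exp_ln, ln_Rinv in H by (try apply Rinv_0_lt_compat; lra). lra.
Qed.

Lemma ln_1_add_inv_pos u : 0 < u -> 0 < ln (1 + / u).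
Proof.
  intro Hu. rewrite <- ln_1. apply ln_increasing; [lra|].
  pose proof (Rinv_0_lt_compat u Hu). lra.
Qed.

Lemma sq_sub_le y c L : 0 <= y -> 0 <= c -> 0 <= L -> y - c <= L -> y * y - 2 * c * y <= L * L.
Proof. intros Hy Hc HL HyL. destruct (Rle_dec c y); nra. Qed.

Lemma sqrt_succ_le lam n : 0 < lam -> / lam <= sqrt (INR n) ->
  sqrt (INR (S n)) <= lam / 2 + sqrt (INR n).
Proof.
  intros Hlam Hn. pose proof (sqrt_pos (INR n)).
  assert (1 <= lam * sqrt (INR n)).
  { apply (Rmult_le_compat_l lam) in Hn; [|lra]. now rewrite Rinv_r in Hn by lra. }
  rewrite <- (sqrt_Rsqr (lam / 2 + sqrt (INR n))) by lra. apply sqrt_le_1_alt.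
  rewrite S_INR. unfold Rsqr. pose proof (sqrt_sqrt (INR n) (pos_INR n)). nra.
Qed.

Lemma exists_sqrt_INR_ge (N : nat) (X : R) : exists n, (N <= n)%nat /\ X <= sqrt (INR n).
Proof.
  destruct (INR_archimed 1 (X * X) ltac:(lra)) as [m Hm].
  exists (m + N)%nat. split; [lia|]. rewrite plus_INR. pose proof (pos_INR N).
  apply Rle_trans with (Rabs X); [apply Rle_abs|].
  rewrite <- sqrt_Rsqr_abs. apply sqrt_le_1_alt. unfold Rsqr. lra.
Qed.

Lemma exists_INR_sub_sqrt_ge (N : nat) (b K : R) :
  exists n, (N <= n)%nat /\ K <= INR n - b * sqrt (INR n).
Proof.
  destruct (exists_sqrt_INR_ge N (Rabs b + Rabs K + 1)) as [n [Hn Hy]].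
  exists n. split; [exact Hn|].
  pose proof (sqrt_sqrt (INR n) (pos_INR n)). pose proof (Rle_abs b). pose proof (Rle_abs K).
  pose proof (Rabs_pos b). pose proof (Rabs_pos K). nra.
Qed.

(* Compare [a^-(1+u)] with [int_(a-1)^a t^-(1+u) dt]; the key is [ln (a / (a - 1)) >= 1 / a]. *)
Lemma Rpower_telescope u a : 0 < u -> 2 <= a ->
  Rpower a (- (1 + u)) <= / u * (Rpower (a - 1) (- u) - Rpower a (- u)).
Proof.
  intros Hu Ha. set (d := ln a - ln (a - 1)).
  assert (Hd : / a <= d).
  { assert (Ed : d = ln (a / (a - 1))).
    { unfold d, Rdiv. rewrite ln_mult, ln_Rinv by (try apply Rinv_0_lt_compat; lra). ring. }
    rewrite Ed. pose proof (ln_ge_1_sub_inv (a / (a - 1))) as Hln.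
    replace (/ (a / (a - 1))) with (1 - / a) in Hln by (field; lra).
    assert (0 < a / (a - 1)) by (apply Rdiv_lt_0_compat; lra). lra. }
  assert (E1 : Rpower (a - 1) (- u) = Rpower a (- u) * exp (u * d)).
  { unfold Rpower, d. rewrite <- exp_plus. f_equal. ring. }
  assert (E2 : Rpower a (- (1 + u)) = Rpower a (- u) * / a).
  { rewrite <- (exp_ln a) at 3 by lra. rewrite <- exp_Ropp. unfold Rpower.
    rewrite <- exp_plus. f_equal. ring. }
  rewrite E1, E2. pose proof (exp_ineq1_le (u * d)). pose proof (exp_pos (- u * ln a)).
  apply (Rmult_le_reg_l u); [exact Hu|].
  replace (u * (/ u * (Rpower a (- u) * exp (u * d) - Rpower a (- u))))
    with (Rpower a (- u) * (exp (u * d) - 1)) by (field; lra).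
  assert (u * / a <= exp (u * d) - 1) by nra.
  replace (u * (Rpower a (- u) * / a)) with (Rpower a (- u) * (u * / a)) by ring.
  apply Rmult_le_compat_l; [left; apply exp_pos|assumption].
Qed.

Lemma exists_Rpower_le s delta eta : 0 < s -> 0 < delta -> 0 < eta ->
  exists rho, 0 < rho <= delta /\ Rpower rho s <= eta.
Proof.
  intros Hs Hd He. set (rho := Rmin delta (exp (ln eta / s))).
  assert (Hrho : 0 < rho) by (apply Rmin_glb_lt; [lra|apply exp_pos]).
  exists rho. split; [split; [exact Hrho|apply Rmin_l]|].
  unfold Rpower. rewrite <- (exp_ln eta) by lra. apply exp_le.
  assert (ln rho <= ln eta / s).
  { rewrite <- (ln_exp (ln eta / s)). apply ln_le; [exact Hrho|apply Rmin_r]. }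
  apply Rle_trans with (s * (ln eta / s)); [apply Rmult_le_compat_l; lra|right; field; lra].
Qed.

Lemma Rpower_inv_sq_le u B P : 0 < u -> 0 < B <= P ->
  Rpower (/ P ^ 2) (1 / 2 + u) <= Rpower B (- u) * Rpower P (- (1 + u)).
Proof.
  intros Hu HBP. unfold Rpower. rewrite <- exp_plus. apply exp_le.
  rewrite ln_Rinv, ln_pow by (try apply pow_lt; lra).
  pose proof (ln_le B P ltac:(lra) ltac:(lra)). simpl INR. nra.
Qed.

Definition sumR (l : list R) : R := fold_right Rplus 0 l.

Lemma sumR_app l1 l2 : sumR (l1 ++ l2) = sumR l1 + sumR l2.
Proof. induction l1 as [|a l1 IH]; simpl; [ring|]. rewrite IH; ring. Qed.

Lemma sumR_map_scal_l {T} c (f : T -> R) L : sumR (map (fun a => c * f a) L) = c * sumR (map f L).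
Proof. induction L as [|a L IH]; simpl; [ring|]. rewrite IH; ring. Qed.

Lemma sumR_nonneg (L : list R) : (forall x, In x L -> 0 <= x) -> 0 <= sumR L.
Proof.
  induction L as [|a L IH]; simpl; intros H; [lra|].
  pose proof (H a (or_introl eq_refl)). pose proof (IH (fun x Hx => H x (or_intror Hx))). lra.
Qed.

Lemma sumR_map_filter_le {T} (f g : T -> R) (p : T -> bool) L :
  (forall x, In x L -> 0 <= g x) -> (forall x, In x L -> p x = true -> f x <= g x) ->
  sumR (map f (filter p L)) <= sumR (map g L).
Proof.
  induction L as [|a L IH]; simpl; intros Hg Hfg; [lra|].
  assert (sumR (map f (filter p L)) <= sumR (map g L)) by auto.
  destruct (p a) eqn:E; simpl; [apply Rplus_le_compat; auto|].
  pose proof (Hg a (or_introl eq_refl)). lra.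
Qed.

Lemma sum_f_R0_nth_le {T} (w : T -> R) (d : T) L n : (forall p, 0 <= w p) ->
  (n < length L)%nat -> sum_f_R0 (fun i => w (nth i L d)) n <= sumR (map w L).
Proof.
  intros Hw. revert n. induction L as [|a L IH]; intros n Hn; simpl in Hn; [lia|].
  assert (0 <= sumR (map w L)).
  { apply sumR_nonneg. intros y Hy. apply in_map_iff in Hy. destruct Hy as [p [<- _]]. apply Hw. }
  destruct n as [|n]; [simpl; pose proof (Hw a); lra|].
  rewrite decomp_sum by lia. simpl. apply Rplus_le_compat_l, (IH n). lia.
Qed.

Lemma infinite_sum_of_bounded (a : nat -> R) M : (forall i, 0 <= a i) ->
  (forall n, sum_f_R0 a n <= M) -> exists l, infinite_sum a l /\ l <= M.
Proof.
  intros Ha HM.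
  assert (Hgrow : Un_growing (sum_f_R0 a)) by (intro n; simpl; pose proof (Ha (S n)); lra).
  assert (Hub : has_ub (sum_f_R0 a)) by (exists M; intros y [n ->]; apply HM).
  destruct (growing_cv _ Hgrow Hub) as [l Hl]. exists l. split; [exact Hl|].
  apply Rnot_lt_le. intro Hlt. destruct (Hl (l - M) ltac:(lra)) as [n Hn].
  specialize (Hn n (le_n n)). unfold Rdist in Hn. apply Rabs_def2 in Hn.
  specialize (HM n). lra.
Qed.

Lemma sumR_Rpower_seq_telescope u A : 0 < u -> (1 <= A)%nat ->
  sumR (map (fun a => Rpower (INR a) (- (1 + u))) (seq 1 A))
  <= 1 + / u * (1 - Rpower (INR A) (- u)).
Proof.
  intros Hu HA. induction A as [|A IH]; [lia|]. destruct A as [|A].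
  - unfold Rpower; simpl. rewrite ln_1, !Rmult_0_r, exp_0. lra.
  - rewrite seq_S, map_app, sumR_app. cbn [map]. unfold sumR at 2. cbn [fold_right].
    specialize (IH ltac:(lia)).
    pose proof (Rpower_telescope u (INR (1 + S A)) Hu) as Ht.
    replace (INR (1 + S A) - 1) with (INR (S A)) in Ht by (rewrite plus_INR; simpl; ring).
    replace (1 + S A)%nat with (S (S A)) in * by lia.
    specialize (Ht ltac:(apply (le_INR 2); lia)).
    assert (0 < / u) by (apply Rinv_0_lt_compat; lra). nra.
Qed.

Lemma sumR_Rpower_seq_le u A : 0 < u ->
  sumR (map (fun a => Rpower (INR a) (- (1 + u))) (seq 1 A)) <= 1 + / u.
Proof.
  intros Hu. assert (0 < / u) by (apply Rinv_0_lt_compat; lra). destruct A as [|A].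
  - simpl. lra.
  - pose proof (sumR_Rpower_seq_telescope u (S A) Hu ltac:(lia)).
    assert (0 < Rpower (INR (S A)) (- u)) by apply exp_pos.
    assert (0 < / u * Rpower (INR (S A)) (- u)) by (apply Rmult_lt_0_compat; lra). lra.
Qed.

(** * Continued fraction digits and cylinders *)

Definition unit_irrational (x : R) : Prop := 0 < x < 1 /\ irrational x.

Lemma irrational_neq0 x : irrational x -> x <> 0.
Proof. intros Hx E; apply Hx; exists 0%Z, 1%Z; split; [lia|rewrite E; field]. Qed.

Lemma irrational_inv_sub x k : irrational x -> irrational (/ x - IZR k).
Proof.
  intros Hx [p [q [Hq E]]]; apply Hx.
  pose proof (irrational_neq0 x Hx) as Hx0.
  assert (Hq0 : IZR q <> 0) by now apply not_0_IZR.
  assert (Einv : / x * IZR q = IZR (k * q + p)).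
  { rewrite plus_IZR, mult_IZR. replace (/ x) with (IZR k + IZR p / IZR q) by lra.
    field; exact Hq0. }
  assert (Hkqp : IZR (k * q + p) <> 0).
  { rewrite <- Einv. apply Rmult_integral_contrapositive.
    split; [apply Rinv_neq_0_compat|]; assumption. }
  exists q, (k * q + p)%Z; split; [intro Z0; apply Hkqp; rewrite Z0; reflexivity|].
  rewrite <- Einv. field. split; assumption.
Qed.

Lemma Int_part_inv_ge1 x : 0 < x < 1 -> (1 <= Int_part (/ x))%Z.
Proof.
  intros Hx. assert (Hinv : 1 < / x).
  { rewrite <- Rinv_1. apply Rinv_lt_contravar; lra. }
  destruct (base_Int_part (/ x)) as [_ Hk].
  assert (Hpos : 0 < IZR (Int_part (/ x))) by lra. apply lt_0_IZR in Hpos. lia.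
Qed.

Lemma gauss_unit_irrational x : unit_irrational x -> unit_irrational (gauss x).
Proof.
  intros [Hx Hirr]. pose proof (irrational_inv_sub x (Int_part (/ x)) Hirr) as Hg.
  fold (gauss x) in Hg. pose proof (irrational_neq0 _ Hg).
  destruct (base_Int_part (/ x)). unfold gauss in *. split; [lra|exact Hg].
Qed.

Lemma unit_irrational_gauss_iter m x :
  unit_irrational x -> unit_irrational (gauss_iter m x).
Proof. intro H. induction m; [exact H|apply gauss_unit_irrational, IHm]. Qed.

Lemma gauss_iter_succ m x : gauss_iter m (gauss x) = gauss_iter (S m) x.
Proof. induction m; simpl; [reflexivity|]. now rewrite IHm. Qed.

Lemma pq_succ k x : pq (S (S k)) x = pq (S k) (gauss x).
Proof. unfold pq. simpl. now rewrite Nat.sub_0_r, gauss_iter_succ. Qed.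

Lemma INR_pq1 x : 0 < x < 1 -> INR (pq 1 x) = IZR (Int_part (/ x)).
Proof.
  intro Hx. unfold pq. simpl. rewrite INR_IZR_INZ, Z2Nat.id; [reflexivity|].
  pose proof (Int_part_inv_ge1 x Hx). lia.
Qed.

Lemma inv_pq1_gauss x : 0 < x < 1 -> x = / (INR (pq 1 x) + gauss x).
Proof.
  intro Hx. rewrite INR_pq1 by exact Hx. unfold gauss.
  replace (IZR (Int_part (/ x)) + (/ x - IZR (Int_part (/ x)))) with (/ x) by ring.
  now rewrite Rinv_inv.
Qed.

Lemma pq_ge1 k x : unit_irrational x -> (1 <= k)%nat -> (1 <= pq k x)%nat.
Proof.
  intros H Hk. destruct k as [|k]; [lia|].
  assert (E : pq (S k) x = pq 1 (gauss_iter k x)).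
  { unfold pq. simpl. now rewrite Nat.sub_0_r. }
  rewrite E. apply INR_le. destruct (unit_irrational_gauss_iter k x H) as [Hg _].
  rewrite INR_pq1 by exact Hg. apply IZR_le, Int_part_inv_ge1, Hg.
Qed.

Definition digits (n : nat) (x : R) : list nat := map (fun k => pq k x) (seq 1 n).

Definition wprod (h : nat -> R) (l : list nat) : R := fold_right (fun a r => h a * r) 1 l.

Definition digit_prod (l : list nat) : R := wprod INR l.

Definition cylinder (l : list nat) (x : R) : Prop :=
  unit_irrational x /\ digits (length l) x = l.

Lemma digits_length n x : length (digits n x) = n.
Proof. unfold digits. now rewrite length_map, length_seq. Qed.

Lemma digits_succ n x : digits (S n) x = pq 1 x :: digits n (gauss x).
Proof.
  unfold digits. simpl. f_equal. rewrite <- seq_shift, map_map.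
  apply map_ext_in. intros k Hk. apply in_seq in Hk. destruct k as [|k]; [lia|].
  apply pq_succ.
Qed.

Lemma digits_succ_r n x : digits (S n) x = digits n x ++ pq (S n) x :: nil.
Proof. unfold digits. now rewrite seq_S, map_app. Qed.

Lemma digits_ge1 n x a : unit_irrational x -> In a (digits n x) -> (1 <= a)%nat.
Proof.
  intros Hx Ha. apply in_map_iff in Ha. destruct Ha as [k [<- Hk]].
  apply in_seq in Hk. apply pq_ge1; [exact Hx|lia].
Qed.

Lemma wprod_app h l1 l2 : wprod h (l1 ++ l2) = wprod h l1 * wprod h l2.
Proof. induction l1 as [|a l1 IH]; simpl; [ring|]. rewrite IH. ring. Qed.

Lemma digit_prod_ge1 l : (forall a, In a l -> (1 <= a)%nat) -> 1 <= digit_prod l.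
Proof.
  induction l as [|a l IH]; simpl; intros H; [lra|].
  assert (1 <= INR a) by (apply (le_INR 1), H; auto).
  assert (1 <= digit_prod l) by (apply IH; auto). unfold digit_prod in *; simpl. nra.
Qed.

Lemma Rabs_inv_plus_sub A g g' P : 1 <= A -> 0 < g < 1 -> 0 < g' < 1 -> 0 < P ->
  Rabs (g - g') <= / P ^ 2 -> Rabs (/ (A + g) - / (A + g')) <= / (A * P) ^ 2.
Proof.
  intros HA Hg Hg' HP Hd.
  replace (/ (A + g) - / (A + g')) with ((g' - g) / ((A + g) * (A + g'))) by (field; lra).
  unfold Rdiv. rewrite Rabs_mult, Rabs_inv, (Rabs_pos_eq ((A + g) * (A + g'))) by nra.
  rewrite Rabs_minus_sym.
  replace (/ (A * P) ^ 2) with (/ P ^ 2 * / (A * A)) by (field; lra).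
  apply Rmult_le_compat; [apply Rabs_pos|left; apply Rinv_0_lt_compat; nra|exact Hd|].
  apply Rinv_le_contravar; nra.
Qed.

(* The cylinder of [a :: l] is the image of the cylinder of [l] under [g |-> 1 / (a + g)]. *)
Lemma cylinder_diam l : diam_le (cylinder l) (/ digit_prod l ^ 2).
Proof.
  induction l as [|a l IH]; intros x y [Gx Ex] [Gy Ey].
  - destruct Gx as [Hx _], Gy as [Hy _]. unfold digit_prod, wprod; simpl.
    replace (/ (1 * 1)) with 1 by field. apply Rabs_le; lra.
  - simpl length in Ex, Ey. rewrite digits_succ in Ex, Ey.
    injection Ex as Eax Ex. injection Ey as Eay Ey.
    pose proof (gauss_unit_irrational x Gx) as Gx'.
    pose proof (gauss_unit_irrational y Gy) as Gy'.
    rewrite (inv_pq1_gauss x), (inv_pq1_gauss y), Eax, Eay by apply Gx || apply Gy.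
    assert (Hl : forall b, In b l -> (1 <= b)%nat) by (rewrite <- Ex; intro; apply digits_ge1, Gx').
    assert (Ha : 1 <= INR a) by (rewrite <- Eax; apply (le_INR 1), pq_ge1; auto).
    pose proof (digit_prod_ge1 l Hl).
    change (digit_prod (a :: l)) with (INR a * digit_prod l).
    apply Rabs_inv_plus_sub; try apply Gx'; try apply Gy'; try lra.
    apply IH; split; assumption.
Qed.

Fixpoint words (n A : nat) : list (list nat) :=
  match n with
  | O => nil :: nil
  | S m => flat_map (fun a => map (cons a) (words m A)) (seq 1 A)
  end.

Lemma In_words n A l :
  In l (words n A) <-> length l = n /\ forall a, In a l -> (1 <= a <= A)%nat.
Proof.
  revert l; induction n as [|n IH]; intros l; simpl.
  - split; [intros [<-|[]]; split; [reflexivity|intros a []]|].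
    intros [Hl _]; left; destruct l; [reflexivity|discriminate].
  - rewrite in_flat_map. split.
    + intros [a [Ha Hl]]. apply in_map_iff in Hl. destruct Hl as [l' [<- Hl']].
      apply IH in Hl'. apply in_seq in Ha. simpl.
      split; [now f_equal|intros b [<-|Hb]; [lia|now apply Hl']].
    + intros [Hl Ha]. destruct l as [|a l]; [discriminate|]. exists a. split.
      * apply in_seq. specialize (Ha a (or_introl eq_refl)). lia.
      * apply in_map, IH. split; [simpl in Hl; lia|intros b Hb; apply Ha; now right].
Qed.

Lemma sumR_wprod_cons h s W :
  sumR (map (wprod h) (flat_map (fun a => map (cons a) W) s))
  = sumR (map h s) * sumR (map (wprod h) W).
Proof.
  induction s as [|a s IH]; simpl; [ring|].
  rewrite map_app, sumR_app, IH, map_map, (sumR_map_scal_l (h a) (wprod h)). ring.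
Qed.

Lemma sumR_words_wprod h n A : sumR (map (wprod h) (words n A)) = sumR (map h (seq 1 A)) ^ n.
Proof.
  induction n as [|n IH]; simpl; [unfold wprod; simpl; ring|].
  now rewrite sumR_wprod_cons, IH.
Qed.

Lemma wprod_Rpower t l : (forall a, In a l -> (1 <= a)%nat) ->
  wprod (fun a => Rpower (INR a) t) l = Rpower (digit_prod l) t.
Proof.
  induction l as [|a l IH]; intros H.
  - unfold Rpower; simpl. now rewrite ln_1, Rmult_0_r, exp_0.
  - simpl. rewrite IH by (intros b Hb; apply H; now right).
    assert (1 <= INR a) by (apply (le_INR 1), H; now left).
    assert (1 <= digit_prod l) by (apply digit_prod_ge1; intros b Hb; apply H; now right).
    apply Rpower_mult_distr; lra.
Qed.

(** * Growth of the digit product *)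

Lemma Tmax_ge_pq n x k : (1 <= k <= n)%nat -> (pq k x <= Tmax n x)%nat.
Proof.
  induction n as [|n IH]; intros Hk; [lia|]. simpl.
  destruct (Nat.eq_dec k (S n)) as [->|Hne]; [lia|].
  specialize (IH ltac:(lia)). lia.
Qed.

Lemma Tmax_ge1 n x : unit_irrational x -> (1 <= n)%nat -> 1 <= INR (Tmax n x).
Proof.
  intros Hx Hn. apply (le_INR 1). pose proof (pq_ge1 n x Hx Hn).
  pose proof (Tmax_ge_pq n x n ltac:(lia)). lia.
Qed.

Lemma ln_digit_prod_succ n x : unit_irrational x ->
  ln (digit_prod (digits (S n) x)) = ln (digit_prod (digits n x)) + ln (INR (pq (S n) x)).
Proof.
  intro Hx. unfold digit_prod. rewrite digits_succ_r, wprod_app. simpl. rewrite Rmult_1_r.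
  apply ln_mult.
  - pose proof (digit_prod_ge1 (digits n x) (fun a => digits_ge1 n x a Hx)).
    unfold digit_prod in *; lra.
  - apply lt_0_INR. pose proof (pq_ge1 (S n) x Hx). lia.
Qed.

(* When the running maximum jumps from [T] to [a <= e^lam T], then
   [ln a ^ 2 - ln T ^ 2 = (ln a - ln T) (ln a + ln T) <= 2 lam ln a]. *)

Lemma ln_Tmax_sq_step lam n x : 0 < lam -> unit_irrational x -> (1 <= n)%nat ->
  INR (Tmax (S n) x) <= exp lam * INR (Tmax n x) ->
  ln (INR (Tmax (S n) x)) ^ 2 - ln (INR (Tmax n x)) ^ 2 <= 2 * lam * ln (INR (pq (S n) x)).
Proof.
  intros Hlam Hx Hn Hratio. pose proof (Tmax_ge1 n x Hx Hn) as HT.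
  assert (Ha : 1 <= INR (pq (S n) x)) by (apply (le_INR 1), pq_ge1; auto).
  pose proof (ln_nonneg _ HT). pose proof (ln_nonneg _ Ha).
  simpl Tmax in *. destruct (Nat.le_gt_cases (pq (S n) x) (Tmax n x)) as [Hle|Hgt].
  - rewrite Nat.max_l by exact Hle. nra.
  - rewrite Nat.max_r in * by lia.
    assert (Hup : ln (INR (pq (S n) x)) <= lam + ln (INR (Tmax n x))).
    { rewrite <- (ln_exp lam) at 1. rewrite <- ln_mult by (try apply exp_pos; lra).
      apply ln_le; lra. }
    assert (Hlow : ln (INR (Tmax n x)) <= ln (INR (pq (S n) x))).
    { apply ln_le; [lra|]. apply le_INR; lia. }
    nra.
Qed.

Lemma ln_Tmax_sq_le lam N x : 0 < lam -> unit_irrational x -> (1 <= N)%nat ->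
  (forall n, (N <= n)%nat -> INR (Tmax (S n) x) <= exp lam * INR (Tmax n x)) ->
  forall n, (N <= n)%nat ->
  ln (INR (Tmax n x)) ^ 2 - ln (INR (Tmax N x)) ^ 2 <= 2 * lam * ln (digit_prod (digits n x)).
Proof.
  intros Hlam Hx HN Hratio n Hn. induction Hn as [|n Hn IH].
  - pose proof (ln_nonneg _ (digit_prod_ge1 (digits N x) (fun a => digits_ge1 N x a Hx))). nra.
  - rewrite ln_digit_prod_succ by exact Hx.
    pose proof (ln_Tmax_sq_step lam n x Hlam Hx ltac:(lia) (Hratio n Hn)). nra.
Qed.

(** * Covers and Hausdorff dimension *)

Definition finite_cover (s delta eta : R) (E : R -> Prop) : Prop :=
  exists L : list ((R -> Prop) * R),
    (forall p, In p L -> 0 < snd p <= delta /\ diam_le (fst p) (snd p)) /\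
    (forall x, E x -> exists p, In p L /\ fst p x) /\
    sumR (map (fun p => Rpower (snd p) s) L) <= eta.

Lemma finite_cover_weaken s delta delta' eta eta' E :
  delta <= delta' -> eta <= eta' -> finite_cover s delta eta E -> finite_cover s delta' eta' E.
Proof.
  intros Hd He [L [Hfine [Hcov Hw]]]. exists L. split; [|split; [exact Hcov|lra]].
  intros p Hp. destruct (Hfine p Hp) as [[? ?] ?]. repeat split; auto; lra.
Qed.

Lemma finite_cover_nonempty s delta eta E : 0 < s -> 0 < delta -> 0 < eta ->
  finite_cover s delta eta E ->
  exists L : list ((R -> Prop) * R), L <> nil /\
    (forall p, In p L -> 0 < snd p <= delta /\ diam_le (fst p) (snd p)) /\
    (forall x, E x -> exists p, In p L /\ fst p x) /\
    sumR (map (fun p => Rpower (snd p) s) L) <= 2 * eta.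
Proof.
  intros Hs Hd He [L [Hfine [Hcov Hw]]].
  destruct (exists_Rpower_le s delta eta Hs Hd He) as [rho [Hrho Hrhos]].
  exists ((fun _ => False, rho) :: L). split; [discriminate|split; [|split]].
  - intros p [<-|Hp]; [|auto]. split; [exact Hrho|intros x y []].
  - intros x Hx. destruct (Hcov x Hx) as [p [Hp Hpx]]. exists p. split; [right|]; assumption.
  - simpl. lra.
Qed.

Lemma cylinder_cover u n A B (E : R -> Prop) : 0 < u -> 0 < B ->
  (forall x, E x -> unit_irrational x /\ (Tmax n x <= A)%nat /\ B <= digit_prod (digits n x)) ->
  finite_cover (1 / 2 + u) (/ B ^ 2) (Rpower B (- u) * (1 + / u) ^ n) E.
Proof.
  intros Hu HB HE.
  set (big := fun l => if Rle_dec B (digit_prod l) then true else false).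
  assert (Hbig : forall l, big l = true -> B <= digit_prod l).
  { intro l. unfold big. now destruct Rle_dec. }
  assert (Hprod : forall l, In l (words n A) -> 1 <= digit_prod l).
  { intros l Hl. apply In_words in Hl. apply digit_prod_ge1. intros a Ha. now apply Hl. }
  exists (map (fun l => (cylinder l, / digit_prod l ^ 2)) (filter big (words n A))).
  split; [|split].
  - intros p Hp. apply in_map_iff in Hp. destruct Hp as [l [<- Hl]].
    apply filter_In in Hl. destruct Hl as [Hl Hl'].
    pose proof (Hprod l Hl). pose proof (Hbig l Hl'). cbn [fst snd].
    split; [|apply cylinder_diam]. split; [apply Rinv_0_lt_compat, pow_lt; lra|].
    apply Rinv_le_contravar; [apply pow_lt; lra|apply pow_incr; lra].
  - intros x Hx. destruct (HE x Hx) as [Gx [HA HBx]].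
    exists (cylinder (digits n x), / digit_prod (digits n x) ^ 2).
    split; [|split; [exact Gx|now rewrite digits_length]].
    apply (in_map (fun l => (cylinder l, / digit_prod l ^ 2))), filter_In. split.
    + apply In_words. split; [apply digits_length|].
      intros a Ha. split; [now apply (digits_ge1 n x)|].
      apply in_map_iff in Ha. destruct Ha as [k [<- Hk]]. apply in_seq in Hk.
      pose proof (Tmax_ge_pq n x k ltac:(lia)). lia.
    + unfold big. now destruct Rle_dec.
  - rewrite map_map. cbn [fst snd].
    eapply Rle_trans.
    + apply (sumR_map_filter_le _
        (fun l => Rpower B (- u) * wprod (fun a => Rpower (INR a) (- (1 + u))) l)).
      * intros l Hl. apply Rmult_le_pos; [left; apply exp_pos|].
        rewrite wprod_Rpower by (apply In_words in Hl; apply Hl). left; apply exp_pos.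
      * intros l Hl Hbl. apply In_words in Hl. rewrite wprod_Rpower by apply Hl.
        apply Rpower_inv_sq_le; [exact Hu|split; [exact HB|now apply Hbig]].
    + rewrite sumR_map_scal_l, sumR_words_wprod.
      apply Rmult_le_compat_l; [left; apply exp_pos|]. apply pow_incr. split.
      * apply sumR_nonneg. intros r Hr. apply in_map_iff in Hr.
        destruct Hr as [a [<- _]]. left; apply exp_pos.
      * now apply sumR_Rpower_seq_le.
Qed.

Section Enumeration.

Variables (T : Type) (d : T) (Lp : nat -> list T).
Hypothesis Lp_nonempty : forall N, Lp N <> nil.

Fixpoint concat_prefix (k : nat) : list T :=
  match k with O => nil | S k => concat_prefix k ++ Lp k end.

(* [enum] lists [Lp 0 ++ Lp 1 ++ ...]: as every block is nonempty, the first [i + 1]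
   blocks already have more than [i] entries. *)
Definition enum (i : nat) : T := nth i (concat_prefix (S i)) d.

Lemma concat_prefix_app k k' : (k <= k')%nat ->
  exists rest, concat_prefix k' = concat_prefix k ++ rest.
Proof.
  induction 1 as [|k' _ [rest E]]; [exists nil; now rewrite app_nil_r|].
  exists (rest ++ Lp k'). simpl. now rewrite E, app_assoc.
Qed.

Lemma length_concat_prefix k : (k <= length (concat_prefix k))%nat.
Proof.
  induction k as [|k IH]; simpl; [lia|]. rewrite length_app.
  specialize (Lp_nonempty k). destruct (Lp k); [congruence|]. simpl. lia.
Qed.

Lemma nth_concat_prefix i k : (i < length (concat_prefix k))%nat ->
  nth i (concat_prefix k) d = enum i.
Proof.
  intro Hi. unfold enum. pose proof (length_concat_prefix (S i)).
  destruct (Nat.le_ge_cases k (S i)) as [Hk|Hk].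
  - destruct (concat_prefix_app k (S i) Hk) as [rest ->]. now rewrite app_nth1.
  - destruct (concat_prefix_app (S i) k Hk) as [rest ->]. rewrite app_nth1; [reflexivity|lia].
Qed.

Lemma In_concat_prefix p k : In p (concat_prefix k) -> exists N, In p (Lp N).
Proof.
  induction k as [|k IH]; simpl; [intros []|].
  intros Hp. apply in_app_or in Hp. destruct Hp; eauto.
Qed.

Lemma enum_In i : exists N, In (enum i) (Lp N).
Proof.
  apply (In_concat_prefix _ (S i)), nth_In. pose proof (length_concat_prefix (S i)). lia.
Qed.

Lemma enum_surj N p : In p (Lp N) -> exists i, enum i = p.
Proof.
  intros Hp. destruct (In_nth _ _ d Hp) as [j [Hj Ej]].
  exists (length (concat_prefix N) + j)%nat. rewrite <- nth_concat_prefix with (k := S N).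
  - simpl. rewrite app_nth2, Nat.add_comm, Nat.add_sub by lia. exact Ej.
  - simpl. rewrite length_app. lia.
Qed.

Lemma sum_f_R0_enum_le (w : T -> R) n : (forall p, 0 <= w p) ->
  sum_f_R0 (fun i => w (enum i)) n <= sumR (map w (concat_prefix (S n))).
Proof.
  intros Hw. pose proof (length_concat_prefix (S n)).
  rewrite (sum_eq _ (fun i => w (nth i (concat_prefix (S n)) d))).
  - apply sum_f_R0_nth_le; [exact Hw|lia].
  - intros i Hi. now rewrite nth_concat_prefix by lia.
Qed.

End Enumeration.

Lemma sumR_concat_prefix_geometric {T} (w : T -> R) (Lp : nat -> list T) c k :
  (forall N, sumR (map w (Lp N)) <= c * (/ 2) ^ N) ->
  sumR (map w (concat_prefix T Lp k)) <= 2 * c * (1 - (/ 2) ^ k).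
Proof.
  intros HL. induction k as [|k IH]; simpl; [lra|].
  rewrite map_app, sumR_app. specialize (HL k). lra.
Qed.

(* Cover [G N] with weight at most [eps 2^-(N+2)] and enumerate all these covers. *)
Lemma Hdelta_null_of_finite_covers s delta (E : R -> Prop) (G : nat -> R -> Prop) :
  0 < s -> 0 < delta ->
  (forall x, E x -> exists N, G N x) ->
  (forall N eta, 0 < eta -> finite_cover s delta eta (G N)) ->
  Hdelta_null s delta E.
Proof.
  intros Hs Hd HE HG eps Heps.
  set (w := fun p : (R -> Prop) * R => Rpower (snd p) s).
  assert (Hpow : forall N, 0 < (/ 2) ^ N) by (intro N; apply pow_lt; lra).
  destruct (functional_choice (fun N L => L <> nil /\
      (forall p, In p L -> 0 < snd p <= delta /\ diam_le (fst p) (snd p)) /\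
      (forall x, G N x -> exists p, In p L /\ fst p x) /\
      sumR (map w L) <= eps / 4 * (/ 2) ^ N)) as [Lp HLp].
  { intro N. assert (Heta : 0 < eps / 8 * (/ 2) ^ N) by (apply Rmult_lt_0_compat; [lra|apply Hpow]).
    destruct (finite_cover_nonempty s delta _ (G N) Hs Hd Heta (HG N _ Heta)) as [L HL].
    destruct HL as [Hne [Hfine [Hcov Hsum]]].
    exists L. unfold w. split; [|split; [|split]]; auto; lra. }
  set (d := (fun _ : R => False, 1)).
  pose proof (fun N => proj1 (HLp N)) as Hne.
  assert (Hw : forall p, 0 <= w p) by (intro p; left; apply exp_pos).
  destruct (infinite_sum_of_bounded (fun i => w (enum _ d Lp i)) (eps / 2)) as [l [Hl Hle]].
  - intro i. apply Hw.
  - intro n. eapply Rle_trans; [apply sum_f_R0_enum_le; [exact Hne|exact Hw]|].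
    eapply Rle_trans; [apply (sumR_concat_prefix_geometric w Lp (eps / 4)), HLp|].
    pose proof (Hpow (S n)). nra.
  - exists (fun i => fst (enum _ d Lp i)), (fun i => snd (enum _ d Lp i)), l.
    split; [|split; [|split; [exact Hl|lra]]].
    + intro i. destruct (enum_In _ d Lp Hne i) as [N HN]. destruct (HLp N) as [_ [Hfine _]].
      destruct (Hfine _ HN) as [[? ?] ?]. auto.
    + intros x Hx. destruct (HE x Hx) as [N HN]. destruct (HLp N) as [_ [_ [Hcov _]]].
      destruct (Hcov x HN) as [p [Hp Hpx]]. destruct (enum_surj _ d Lp Hne N p Hp) as [i Ei].
      exists i. now rewrite Ei.
Qed.

Lemma exists_glb (P : R -> Prop) : (exists y, P y) -> (exists m, forall y, P y -> m <= y) ->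
  exists g, is_glb P g.
Proof.
  intros [y Hy] [m Hm].
  destruct (completeness (fun z => P (- z))) as [g [Hg1 Hg2]].
  - exists (- m). intros z Hz. specialize (Hm _ Hz). lra.
  - exists (- y). now rewrite Ropp_involutive.
  - exists (- g). split.
    + intros z Hz. assert (- z <= g) by (apply Hg1; now rewrite Ropp_involutive). lra.
    + intros b Hb. assert (g <= - b) by (apply Hg2; intros z Hz; specialize (Hb _ Hz); lra). lra.
Qed.

Lemma hausdorff_dim_le (E : R -> Prop) t : 0 <= t ->
  (forall s, t < s -> Hausdorff_null s E) -> exists d, is_hausdorff_dim E d /\ d <= t.
Proof.
  intros Ht Hnull.
  destruct (exists_glb (fun s => 0 <= s /\ Hausdorff_null s E)) as [d [Hd1 Hd2]].
  - exists (t + 1). split; [lra|apply Hnull; lra].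
  - exists 0. intros y [Hy _]. exact Hy.
  - exists d. split; [split; assumption|].
    apply Rnot_lt_le. intro Hlt.
    assert (d <= (t + d) / 2) by (apply Hd1; split; [|apply Hnull]; lra). lra.
Qed.

(** * The set F(1/2,1) *)

(* The points whose running maximum stays within the factors [1 -/+ e0] of
   [e^(sqrt n)] from index [N] on; [F(1/2,1)] is contained in their union over [N]. *)
Definition near_exp_sqrt (e0 : R) (N : nat) (x : R) : Prop :=
  unit_irrational x /\ forall n, (N <= n)%nat ->
    (1 - e0) * exp (sqrt (INR n)) <= INR (Tmax n x) <= (1 + e0) * exp (sqrt (INR n)).

Lemma near_exp_sqrt_mono e0 M N x : (M <= N)%nat -> near_exp_sqrt e0 M x -> near_exp_sqrt e0 N x.
Proof. intros HMN [Gx HT]. split; [exact Gx|]. intros n Hn. apply HT. lia. Qed.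

Section NearExpSqrt.

Variables (u lam e0 : R) (N : nat).
Hypothesis Hu : 0 < u.
Hypothesis Hlam : u = 4 * lam * ln (1 + / u).
Hypothesis He0 : 0 < e0 < 1.
Hypothesis He0lam : 1 + e0 <= exp (lam / 2) * (1 - e0).
Hypothesis HN : (1 <= N)%nat.
Hypothesis HNlam : / lam <= sqrt (INR N).

Let lZ := ln (1 + / u).
Let c := - ln (1 - e0).
Let C := ln (1 + e0) + sqrt (INR N).
Let beta (n : nat) : R := (INR n - 2 * c * sqrt (INR n) - C ^ 2) / (2 * lam).

Let lZ_pos : 0 < lZ := ln_1_add_inv_pos u Hu.

Let lam_pos : 0 < lam.
Proof.
  replace lam with (u / (4 * lZ)) by (rewrite Hlam; fold lZ; field; lra).
  apply Rdiv_lt_0_compat; lra.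
Qed.

Let c_nonneg : 0 <= c.
Proof. unfold c. pose proof (ln_le (1 - e0) 1 ltac:(lra) ltac:(lra)). rewrite ln_1 in *. lra. Qed.

Lemma near_Tmax_ratio x : near_exp_sqrt e0 N x ->
  forall n, (N <= n)%nat -> INR (Tmax (S n) x) <= exp lam * INR (Tmax n x).
Proof.
  intros [_ HT] n Hn.
  destruct (HT (S n) ltac:(lia)) as [_ Hup]. destruct (HT n Hn) as [Hlow _].
  assert (Hsq : exp (sqrt (INR (S n))) <= exp (lam / 2) * exp (sqrt (INR n))).
  { rewrite <- exp_plus. apply exp_le, sqrt_succ_le; [exact lam_pos|].
    apply Rle_trans with (sqrt (INR N)); [exact HNlam|apply sqrt_le_1_alt, le_INR, Hn]. }
  replace (exp lam) with (exp (lam / 2) * exp (lam / 2)) by (rewrite <- exp_plus; f_equal; field).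
  pose proof (exp_pos (lam / 2)). pose proof (exp_pos (sqrt (INR n))).
  pose proof (exp_pos (sqrt (INR (S n)))). nra.
Qed.

Lemma near_ln_digit_prod_ge x : near_exp_sqrt e0 N x -> forall n, (N <= n)%nat ->
  beta n <= ln (digit_prod (digits n x)).
Proof.
  intros Hx n Hn. pose proof (near_Tmax_ratio x Hx) as Hratio. destruct Hx as [Gx HT].
  pose proof (ln_Tmax_sq_le lam N x lam_pos Gx HN Hratio n Hn) as Hsq.
  pose proof (Tmax_ge1 n x Gx ltac:(lia)) as HTn. pose proof (Tmax_ge1 N x Gx HN) as HTN.
  assert (Hlow : sqrt (INR n) - c <= ln (INR (Tmax n x))).
  { destruct (HT n Hn) as [Hn' _]. eapply Rle_trans; [|apply ln_le; [|exact Hn']].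
    - rewrite ln_mult, ln_exp by (try apply exp_pos; lra). unfold c. lra.
    - apply Rmult_lt_0_compat; [lra|apply exp_pos]. }
  assert (Hup : ln (INR (Tmax N x)) <= C).
  { destruct (HT N (le_n N)) as [_ HN']. eapply Rle_trans; [apply ln_le; [lra|exact HN']|].
    rewrite ln_mult, ln_exp by (try apply exp_pos; lra). unfold C; lra. }
  pose proof (sq_sub_le (sqrt (INR n)) c _ (sqrt_pos _) c_nonneg (ln_nonneg _ HTn) Hlow) as Hsq'.
  rewrite (sqrt_sqrt (INR n) (pos_INR n)) in Hsq'.
  assert (ln (INR (Tmax N x)) ^ 2 <= C ^ 2) by (apply pow_incr; pose proof (ln_nonneg _ HTN); lra).
  unfold beta. apply (Rmult_le_reg_l (2 * lam)); [lra|].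
  replace (2 * lam * _) with (INR n - 2 * c * sqrt (INR n) - C ^ 2) by (field; lra). lra.
Qed.

Lemma near_cylinder_cover n : (N <= n)%nat ->
  finite_cover (1 / 2 + u) (exp (- (2 * beta n))) (exp (- u * beta n + INR n * lZ))
    (near_exp_sqrt e0 N).
Proof.
  intros Hn. destruct (INR_archimed 1 ((1 + e0) * exp (sqrt (INR n))) ltac:(lra)) as [A HA].
  rewrite Rmult_1_r in HA.
  assert (Edelta : exp (- (2 * beta n)) = / exp (beta n) ^ 2).
  { rewrite exp_Ropp. replace (2 * beta n) with (beta n + beta n) by ring.
    rewrite exp_plus. field. apply Rgt_not_eq, exp_pos. }
  assert (Eeta : exp (- u * beta n + INR n * lZ) = Rpower (exp (beta n)) (- u) * (1 + / u) ^ n).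
  { unfold Rpower, lZ. pose proof (Rinv_0_lt_compat u Hu).
    rewrite <- ln_pow, ln_exp, exp_plus, exp_ln by (try apply pow_lt; lra). reflexivity. }
  rewrite Edelta, Eeta. apply (cylinder_cover u n A); [exact Hu|apply exp_pos|].
  intros x Hx. split; [apply Hx|split].
  - apply INR_le. destruct Hx as [_ HT]. destruct (HT n Hn). lra.
  - rewrite <- (exp_ln (digit_prod (digits n x))).
    + apply exp_le, near_ln_digit_prod_ge; assumption.
    + pose proof (digit_prod_ge1 _ (fun a => digits_ge1 n x a (proj1 Hx))). lra.
Qed.

(* Since [u / (2 lam) = 2 lZ], the exponent [- u beta n + n lZ] equals
   [- lZ (n - 4 c sqrt n) + O(1)]. *)
Lemma near_finite_cover delta eta : 0 < delta -> 0 < eta ->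
  finite_cover (1 / 2 + u) delta eta (near_exp_sqrt e0 N).
Proof.
  intros Hd Heta. set (K1 := C ^ 2 - lam * ln delta). set (K2 := 2 * C ^ 2 - ln eta / lZ).
  destruct (exists_INR_sub_sqrt_ge N (4 * c) (Rmax K1 K2)) as [n [Hn HK]].
  pose proof (Rmax_l K1 K2). pose proof (Rmax_r K1 K2).
  assert (0 <= c * sqrt (INR n)) by (apply Rmult_le_pos; [exact c_nonneg|apply sqrt_pos]).
  apply finite_cover_weaken with (exp (- (2 * beta n))) (exp (- u * beta n + INR n * lZ)).
  - rewrite <- (exp_ln delta) by exact Hd. apply exp_le.
    apply (Rmult_le_reg_l lam); [lra|]. unfold beta.
    replace (lam * - (2 * _)) with (- (INR n - 2 * c * sqrt (INR n) - C ^ 2)) by (field; lra).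
    unfold K1 in *. nra.
  - rewrite <- (exp_ln eta) by exact Heta. apply exp_le.
    assert (Eu : u / (2 * lam) = 2 * lZ) by (rewrite Hlam; fold lZ; field; lra).
    replace (- u * beta n) with (- (u / (2 * lam)) * (INR n - 2 * c * sqrt (INR n) - C ^ 2))
      by (unfold beta; field; lra).
    rewrite Eu. assert (ln eta / lZ * lZ = ln eta) by (field; lra). unfold K2 in *. nra.
  - now apply near_cylinder_cover.
Qed.

End NearExpSqrt.

Lemma F_half_one_near e0 x : 0 < e0 -> F_half_one x -> exists M, near_exp_sqrt e0 M x.
Proof.
  intros He0 [Hx [Hirr Hcv]]. destruct (Hcv e0 He0) as [M HM]. exists M.
  split; [split; assumption|]. intros n Hn.
  specialize (HM n ltac:(lia)). unfold Rdist in HM. apply Rabs_def2 in HM.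
  pose proof (exp_pos (sqrt (INR n))) as HE.
  replace (INR (Tmax n x)) with (INR (Tmax n x) / exp (sqrt (INR n)) * exp (sqrt (INR n)))
    by (field; lra).
  split; apply Rmult_le_compat_r; lra.
Qed.

Lemma F_half_one_null s : 1 / 2 < s -> Hausdorff_null s F_half_one.
Proof.
  intros Hs delta Hd. set (u := s - 1 / 2). assert (Hu : 0 < u) by (unfold u; lra).
  set (lam := u / (4 * ln (1 + / u))).
  pose proof (ln_1_add_inv_pos u Hu).
  assert (Hlam : u = 4 * lam * ln (1 + / u)) by (unfold lam; field; lra).
  assert (Hlam0 : 0 < lam) by (apply Rdiv_lt_0_compat; lra).
  set (rho := exp (lam / 2)).
  assert (Hrho : 1 < rho) by (unfold rho; rewrite <- exp_0; apply exp_increasing; lra).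
  set (e0 := (rho - 1) / (rho + 1)).
  assert (He0 : 0 < e0 < 1).
  { unfold e0. split; [apply Rdiv_lt_0_compat; lra|].
    apply (Rmult_lt_reg_r (rho + 1)); [lra|].
    unfold Rdiv. rewrite Rmult_assoc, Rinv_l by lra. lra. }
  assert (He0lam : 1 + e0 <= exp (lam / 2) * (1 - e0)) by (fold rho; unfold e0; right; field; lra).
  destruct (exists_sqrt_INR_ge 1 (/ lam)) as [N1 [HN1 HN1lam]].
  apply (Hdelta_null_of_finite_covers s delta F_half_one (fun N => near_exp_sqrt e0 (N + N1)));
    [lra|exact Hd| |].
  - intros x Hx. destruct (F_half_one_near e0 x (proj1 He0) Hx) as [M HM].
    exists M. apply (near_exp_sqrt_mono e0 M); [lia|exact HM].
  - intros N eta Heta. replace s with (1 / 2 + u) by (unfold u; ring).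
    apply (near_finite_cover u lam e0); auto; [lia|].
    apply Rle_trans with (sqrt (INR N1)); [exact HN1lam|apply sqrt_le_1_alt, le_INR; lia].
Qed.

Theorem theorem2 :
  exists d, is_hausdorff_dim F_half_one d /\ d <= 1 / 2.
Proof. apply hausdorff_dim_le; [lra|exact F_half_one_null]. Qed.
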